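(* If $N = q^k n^2$ is an odd perfect number given in Eulerian form, then $q < n\sqrt{3}$.
   Context: For a positive integer $x$, $\sigma(x)$ denotes the sum of the positive divisors of $x$. A positive integer $N$ is perfect if $\sigma(N) = 2N$. An odd perfect number $N$ is said to be given in Eulerian form if $N = q^k n^2$ where $q$ is a prime, $q \equiv k \equiv 1 \pmod 4$, $n$ is a positive integer, and $\gcd(q,n) = 1$. *)

From mathcomp Require Import all_boot.

(* sigma x = sum of the positive divisors of x (divisors 0 = [::]) *)
Definition sigma (x : nat) : nat := \sum_(d <- divisors x) d.

Definition perfect (N : nat) : Prop := 0 < N /\ sigma N = 2 * N.

Definition eulerian_form (N q k n : nat) : Prop :=
  odd N /\ perfect N /\ N = q ^ k * n ^ 2 /\ prime q /\
  q %% 4 = 1 /\ k %% 4 = 1 /\ 0 < n /\ coprime q n.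

From Pilot Require Import Defs.
From Stdlib Require Import Reals.
From mathcomp Require Import all_boot zify.
(* Reals also defines a [sigma]; make [Defs.sigma] the one in scope. *)
Import Defs.

(* Writing m = n^2, perfection and the
   multiplicativity of sigma give sigma(q^k) * sigma(m) = 2 q^k m.
   - If k > 1, q^k is coprime to sigma(q^k) > q^k, so q^k divides sigma(m)
     and sigma(m) < 2m; hence q^2 <= q^k <= sigma(m) < 2m.
   - If k = 1, put w = (q+1)/2, so that w sigma(m) = q m.  Then w divides
     m and q divides sigma(m), hence sigma(r^b) = q t for some prime power
     r^b exactly dividing m = r^b m'.  Cancelling q gives w t sigma(m') = m,
     so w t divides m; writing w = r^v w' with r coprime to w' (and to t,
     a divisor of sigma(r^b)), we get r^b w' t <= m.  Combining this with
     2 sigma(r^b) < 3 r^b (as r >= 3) and r^v <= t^2 (which comes from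
     r^v dividing sigma(r^b) + t = (q+1) t = 2 w t) yields q^2 < 3m. *)

(* sigma is multiplicative: divisors of a b with a, b coprime are exactly
   the products of a divisor of a and a divisor of b. *)
Lemma sigma_coprime_mul a b : 0 < a -> 0 < b -> coprime a b ->
  sigma (a * b) = sigma a * sigma b.
Proof.
move=> a0 b0 cab; rewrite /sigma big_distrlr /=.
rewrite -(big_allpairs_dep (h := muln) (r1 := divisors a)
                           (r2 := fun _ => divisors b) (F := id)) /=.
apply/perm_big/uniq_perm => [||d]; first exact: divisors_uniq.
- apply: allpairs_uniq; [exact: divisors_uniq | exact: divisors_uniq |].
  move=> [x1 y1] [x2 y2] /allpairsP[[u v] [/= u1 v1 [-> ->]]].
  move=> /allpairsP[[u' v'] [/= u2 v2 [-> ->]]] /= E.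
  rewrite -!dvdn_divisors // in u1 u2 v1 v2.
  (* the a-part of a divisor u v is recovered as gcd (u v) a *)
  have a_part x y : x %| a -> y %| b -> gcdn (x * y) a = x.
    move=> xa yb; rewrite gcdnC Gauss_gcdl; first exact/gcdn_idPr.
    exact: coprime_dvdr yb cab.
  have eu : u = u' by rewrite -(a_part u v) // -(a_part u' v') // E.
  subst u'; congr (_, _); apply/eqP.
  by rewrite -(eqn_pmul2l (dvdn_gt0 a0 u1)) E.
- rewrite -dvdn_divisors ?muln_gt0 ?a0 //.
  apply/idP/allpairsP => [dab | [[u v] [/= u1 v1 ->]]]; last first.
    by rewrite -!dvdn_divisors // in u1 v1; exact: dvdn_mul.
  (* d = gcd(d, a) gcd(d, b) *)
  exists (gcdn d a, gcdn d b) => /=.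
  rewrite -!dvdn_divisors // !dvdn_gcdr; split => //.
  apply/eqP; rewrite eqn_dvd; apply/andP; split.
    by rewrite muln_gcdr dvdn_gcd dvdn_mull //= muln_gcdl dvdn_gcd dvdn_mulr.
  rewrite Gauss_dvd ?dvdn_gcdl //.
  exact: coprime_dvdl (dvdn_gcdr _ _) (coprime_dvdr (dvdn_gcdr _ _) cab).
Qed.

Definition geom (r n : nat) : nat := \sum_(i < n) r ^ i.

Lemma geom_split r u w : geom r (u + w) = geom r u + r ^ u * geom r w.
Proof.
rewrite /geom big_split_ord /= big_distrr /=; congr (_ + _).
by apply: eq_bigr => i _; rewrite expnD.
Qed.

Lemma geom1 r : geom r 1 = 1.
Proof. by rewrite /geom big_ord_recl big_ord0. Qed.

Lemma geom_gt0 r n : 0 < n -> 0 < geom r n.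
Proof. by case: n => // n _; rewrite /geom big_ord_recl /= expn0 addSn. Qed.

Lemma geom_telescope r n : 0 < r -> (r - 1) * geom r n + 1 = r ^ n.
Proof.
move=> r0; elim: n => [|n IH]; first by rewrite /geom big_ord0 muln0.
rewrite /geom big_ord_recr /= -/(geom r n) mulnDr expnS.
have : r * r ^ n = (r - 1) * r ^ n + r ^ n by rewrite mulnBl mul1n subnK // leq_pmull.
lia.
Qed.

(* The divisors of r^b are the r^i with i <= b. *)
Lemma sigma_prime_pow r b : prime r -> sigma (r ^ b) = geom r b.+1.
Proof.
move=> pr; rewrite /sigma /geom -(big_mkord xpredT (fun i => r ^ i)).
rewrite /index_iota subn0 -(big_map (fun i => r ^ i) xpredT id).
apply/perm_big/uniq_perm => [||d]; first exact: divisors_uniq.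
- by rewrite map_inj_uniq ?iota_uniq //; exact/expnI/prime_gt1.
- rewrite -dvdn_divisors ?expn_gt0 ?prime_gt0 //.
  apply/(dvdn_pfactor _ _ pr)/mapP => -[i]; rewrite ?mem_iota => ib ->;
    by exists i; rewrite ?mem_iota; lia.
Qed.

(* sigma (r^b) = 1 + r (1 + ... + r^(b-1)) is 1 modulo r. *)
Lemma coprime_sigma_prime_pow r b : prime r -> coprime r (sigma (r ^ b)).
Proof.
move=> pr; rewrite sigma_prime_pow // -addn1 addnC geom_split geom1 expn1.
by rewrite /coprime addnC mulnC gcdnMDl gcdn1.
Qed.

(* sigma (r^b) = (1 + ... + r^(b-1)) + r^b exceeds r^b when b > 0. *)
Lemma sigma_prime_pow_gt r b : prime r -> 0 < b -> r ^ b < sigma (r ^ b).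
Proof.
move=> pr b0; rewrite sigma_prime_pow // -[b.+1]addn1 geom_split geom1 muln1.
by rewrite -[ltnLHS]add0n ltn_add2r geom_gt0.
Qed.

(* For an odd prime r, sigma (r^b) < r^(b+1) / (r - 1) <= (3/2) r^b. *)
Lemma sigma_odd_prime_pow_lt r b : prime r -> 2 < r ->
  2 * sigma (r ^ b) < 3 * r ^ b.
Proof.
move=> pr r3; have := geom_telescope r b.+1 (prime_gt0 pr).
rewrite -sigma_prime_pow // expnS; nia.
Qed.

(* If r^v divides sigma (r^b) + t with v <= b, then r^v <= t^2: modulo r^v,
   sigma (r^b) is 1 + ... + r^(v-1) < r^v / 2, which forces r^v < 2 t. *)
Lemma prime_pow_dvd_sigma_add r b v t : prime r -> 2 < r -> v <= b -> 0 < t ->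
  r ^ v %| sigma (r ^ b) + t -> r ^ v <= t * t.
Proof.
move=> pr r3 vb t0; case: (posnP v) => [-> _| v0]; first by rewrite expn0 muln_gt0 t0.
rewrite sigma_prime_pow // -(subnKC (leqW vb)) geom_split addnAC.
rewrite dvdn_addl ?dvdn_mulr // => /dvdn_leq le_geom.
have := le_geom (ltn_addl _ t0); have := geom_telescope r v (prime_gt0 pr).
have : 2 * geom r v <= (r - 1) * geom r v by rewrite leq_mul2r; apply/orP; right; lia.
nia.
Qed.

(* A prime p dividing sigma m divides sigma (r^b) for some prime power r^b
   exactly dividing m (induction on m, peeling off its least prime factor). *)
Lemma prime_power_factor_of_sigma p m : prime p -> 0 < m -> p %| sigma m ->
  exists r b m', [/\ prime r, 0 < b, m = r ^ b * m', coprime r m'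
                   & p %| sigma (r ^ b)].
Proof.
move=> pp; elim/ltn_ind: m => m IH m0 pd.
case: (leqP m 1) => [m1 | m1].
  move: pd; have -> : m = 1 by lia.
  by rewrite /sigma /= big_cons big_nil addn0 dvdn1 => /eqP p1; rewrite p1 in pp.
pose r := pdiv m; have pr : prime r := pdiv_prime m1.
have [m'' cm'' em] := pfactor_coprime pr m0; set b := logn r m in em.
have b0 : 0 < b by rewrite logn_gt0 mem_primes pr m0 pdiv_dvd.
have m''0 : 0 < m'' by move: m0; rewrite em muln_gt0 => /andP[].
have rb1 : 1 < r ^ b by rewrite -(expn0 r) ltn_exp2l // prime_gt1.
move: pd; rewrite em sigma_coprime_mul ?(ltnW rb1) 1?coprime_sym ?coprimeXl //.
rewrite Euclid_dvdM // => /orP[pd | pd]; last by exists r, b, m''; rewrite mulnC.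
have lt : m'' < m by rewrite em -{1}(muln1 m'') ltn_pmul2l.
have [r' [b' [m2 [pr' b'0 e' c' pd']]]] := IH m'' lt m''0 pd.
exists r', b', (m2 * r ^ b); split => //; first by rewrite e' mulnA.
rewrite coprimeMr c' coprimeXr // coprime_sym.
by apply: coprime_dvdr cm''; rewrite e' dvdn_mulr // dvdn_exp.
Qed.

(* The closing estimate of the exponent-one case:
   p^2 < p (p+1) = 2 p w' R <= (2 p t) (w' t) < 3 B w' t <= 3 m. *)
Lemma sq_lt_three_of_bounds p m t w' R B : 0 < p -> 0 < t -> 0 < w' ->
  p + 1 = 2 * (w' * R) -> R <= t * t -> 2 * (p * t) < 3 * B ->
  B * (w' * t) <= m -> p * p < 3 * m.
Proof.
move=> p0 t0 w'0 ep le_R lt_B le_m.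
have lt1 : p * p < 2 * p * (w' * R) by rewrite -mulnA (mulnCA 2) -ep ltn_pmul2l // addn1.
have le2 : 2 * p * (w' * R) <= 2 * (p * t) * (w' * t).
  have -> : 2 * (p * t) * (w' * t) = 2 * p * (w' * (t * t)) by lia.
  by rewrite !leq_mul2l le_R !orbT.
have lt3 : 2 * (p * t) * (w' * t) < 3 * B * (w' * t) by rewrite ltn_pmul2r ?muln_gt0 ?w'0.
have le4 : 3 * B * (w' * t) <= 3 * m by rewrite -mulnA leq_mul2l le_m orbT.
lia.
Qed.

Lemma prime_dvd_odd_gt2 r m : prime r -> odd m -> r %| m -> 2 < r.
Proof.
move=> pr om /dvdn_odd/(_ om); rewrite ltn_neqAle prime_gt1 // andbT.
by apply: contraTneq => <-.
Qed.

(* With p + 1 = 2 w, the equation (p+1) sigma(m) = 2 p m becomes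
   w sigma(m) = p m; as w is coprime to p, w divides m and p divides sigma(m). *)
Lemma halved_equation p m w : p + 1 = 2 * w -> (p + 1) * sigma m = 2 * (p * m) ->
  [/\ w * sigma m = p * m, w %| m & p %| sigma m].
Proof.
move=> ew E.
have wsm : w * sigma m = p * m.
  by apply/eqP; rewrite -(eqn_pmul2l (isT : 0 < 2)) mulnA -ew E.
have cpw : coprime p w.
  have : coprime p (2 * w) by rewrite -ew addn1 coprimenS.
  by rewrite coprimeMr => /andP[].
split => //; last by rewrite -(Gauss_dvdr _ cpw) wsm dvdn_mulr.
by rewrite -(@Gauss_dvdr w p) 1?coprime_sym // -wsm dvdn_mulr.
Qed.

Lemma sq_lt_three_exponent_one p m : prime p -> odd p -> odd m -> 0 < m ->
  (p + 1) * sigma m = 2 * (p * m) -> p * p < 3 * m.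
Proof.
move=> pp op om m0 E; have p0 := prime_gt0 pp.
have [w ew] : exists w, p + 1 = 2 * w.
  by exists p./2.+1; move: (odd_double_half p); rewrite op; lia.
have w0 : 0 < w by lia.
have [wsm wm ps] := halved_equation p m w ew E.
have [r [b [m' [pr b0 em crm' prb]]]] := prime_power_factor_of_sigma p m pp m0 ps.
have rb0 : 0 < r ^ b by rewrite expn_gt0 prime_gt0.
have m'0 : 0 < m' by move: m0; rewrite em muln_gt0 => /andP[].
have r3 : 2 < r by apply: (prime_dvd_odd_gt2 r m pr om); rewrite em dvdn_mulr // dvdn_exp.
set t := sigma (r ^ b) %/ p; have et : sigma (r ^ b) = p * t by rewrite mulnC divnK.
have t0 : 0 < t.
  by move: (sigma_prime_pow_gt r b pr b0); rewrite et; case: (t) => //; rewrite muln0.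
have [w' cw' ew'] := pfactor_coprime pr w0; set v := logn r w in ew'.
(* sigma(m) = p t sigma(m'), so w t sigma(m') = m *)
have wtm : w * t * sigma m' = m.
  apply/eqP; rewrite -(eqn_pmul2l p0) -wsm em sigma_coprime_mul ?coprimeXl //.
  by rewrite et; apply/eqP; lia.
(* w' t divides m and is coprime to r^b, so r^b w' t <= m *)
have crt : coprime r t.
  by apply: coprime_dvdr (coprime_sigma_prime_pow r b pr); rewrite et dvdn_mull.
have wt_dvd : w' * t %| m.
  by rewrite -wtm ew'; apply/dvdnP; exists (r ^ v * sigma m'); lia.
have le_m : r ^ b * (w' * t) <= m.
  apply: (dvdn_leq m0); rewrite Gauss_dvd ?coprimeXl ?coprimeMr ?cw' // wt_dvd.
  by rewrite em dvdn_mulr.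
have vb : v <= b.
  rewrite -(dvdn_Pexp2l _ _ (prime_gt1 pr)) -(Gauss_dvdl _ (coprimeXl v crm')) -em.
  by apply: dvdn_trans wm; rewrite ew' dvdn_mull.
have lt_sigma : 2 * (p * t) < 3 * r ^ b by rewrite -et sigma_odd_prime_pow_lt.
have le_rv : r ^ v <= t * t.
  apply: (prime_pow_dvd_sigma_add r b v t pr r3 vb t0).
  have -> : sigma (r ^ b) + t = (p + 1) * t by rewrite et mulnDl mul1n.
  by rewrite ew ew'; apply/dvdnP; exists (2 * w' * t); lia.
have w'0 : 0 < w' by move: w0; rewrite ew' muln_gt0 => /andP[].
by apply: (sq_lt_three_of_bounds p m t w' (r ^ v) (r ^ b)); rewrite // -ew' -ew.
Qed.

(* Exponent k > 1: q^k is coprime to sigma(q^k) > q^k, so q^k divides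
   sigma(m) and sigma(m) < 2 m, whence q^2 <= q^k <= sigma(m) < 2 m. *)
Lemma sq_lt_two_exponent_gt1 q k m : prime q -> 1 < k -> 0 < m ->
  sigma (q ^ k) * sigma m = 2 * (q ^ k * m) -> q * q < 2 * m.
Proof.
move=> pq k1 m0 E; have Q0 : 0 < q ^ k by rewrite expn_gt0 prime_gt0.
have cQ : coprime (q ^ k) (sigma (q ^ k)) by rewrite coprimeXl ?coprime_sigma_prime_pow.
have dv : q ^ k %| sigma m by rewrite -(Gauss_dvdr _ cQ) E dvdn_mull // dvdn_mulr.
have s0 : 0 < sigma m by move: E; case: (sigma m) => [|//]; rewrite muln0; lia.
have sm_lt : sigma m < 2 * m.
  have : q ^ k * sigma m < sigma (q ^ k) * sigma m.
    by rewrite ltn_pmul2r // sigma_prime_pow_gt // ltnW.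
  rewrite E mulnCA ltn_pmul2l //.
have qk : q ^ 2 <= q ^ k by rewrite leq_pexp2l ?prime_gt0 // ltnW.
by apply: leq_ltn_trans sm_lt; apply: leq_trans qk (dvdn_leq s0 dv).
Qed.

Lemma eulerian_sq_bound N q k n : eulerian_form N q k n -> q * q < 3 * (n * n).
Proof.
move=> [oN [[_ sN] [eN [pq [q4 [k4 [n0 cqn]]]]]]].
have {}eN : N = q ^ k * (n * n) := eN.
have nn0 : 0 < n * n by rewrite muln_gt0 n0.
have E : sigma (q ^ k) * sigma (n * n) = 2 * (q ^ k * (n * n)).
  have Q0 : 0 < q ^ k by rewrite expn_gt0 prime_gt0.
  have cQn : coprime (q ^ k) (n * n) by rewrite coprimeXl // coprimeMr cqn.
  by rewrite -(sigma_coprime_mul _ _ Q0 nn0 cQn) -eN.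
have [k1 | k1] : k = 1 \/ 1 < k by lia.
  rewrite {}k1 in E; apply: sq_lt_three_exponent_one => //; first by lia.
    by move: oN; rewrite eN oddM => /andP[].
  move: E; rewrite sigma_prime_pow // -[2]/(1 + 1) geom_split geom1.
  by rewrite !expn1 muln1 addnC.
apply: leq_trans (sq_lt_two_exponent_gt1 q k (n * n) pq k1 nn0 E) _.
by rewrite leq_mul2r orbT.
Qed.

Lemma INR_lt_mul_sqrt (a b c : nat) :
  a * a < c * (b * b) -> Rlt (INR a) (Rmult (INR b) (sqrt (INR c))).
Proof.
move=> lt_sq; apply: Rsqr_incrst_0; last 2 first.
- exact: pos_INR.
- exact: Rmult_le_pos (pos_INR b) (sqrt_pos _).
rewrite Rsqr_mult Rsqr_sqrt; last exact: pos_INR.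
rewrite /Rsqr -!mult_INR; apply/lt_INR/ltP.
by rewrite !multE mulnC.
Qed.

Theorem lemma3 (N q k n : nat) :
  eulerian_form N q k n -> Rlt (INR q) (Rmult (INR n) (sqrt (INR 3))).
Proof. by move=> H; apply/INR_lt_mul_sqrt/(eulerian_sq_bound N q k n H). Qed.
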